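(* Let $G$ be a regular graph whose line graph $L(G)$ has at least $3$ vertices. Then $\lambda_3(L(G)) < \frac{|V(L(G))|}{3}$.
   Context: The line graph $L(G)$ has the edges of $G$ as vertices, two being adjacent when they share an endpoint. $\lambda_3$ denotes the third largest eigenvalue (with multiplicity) of the adjacency matrix. *)

From HB Require Import structures.
From mathcomp Require Import all_boot all_order all_algebra.
From mathcomp Require Import polyrcf.
Set Implicit Arguments. Unset Strict Implicit. Unset Printing Implicit Defensive.
Import Order.TTheory GRing.Theory Num.Theory.
Local Open Scope ring_scope.

Definition simple_graph (T : finType) (e : rel T) : Prop :=
  symmetric e /\ irreflexive e.

Definition regular (T : finType) (e : rel T) : Prop :=
  exists d : nat, forall v : T, #|[set w | e v w]| = d.

Definition is_edge (T : finType) (e : rel T) (E : {set T}) : bool :=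
  [exists u, exists v, e u v && (E == [set u; v])].

Definition edge_set (T : finType) (e : rel T) : {set {set T}} :=
  [set E | is_edge e E].

Definition line_adj (T : finType) (E F : {set T}) : bool :=
  (E != F) && (E :&: F != set0).

Definition nL (T : finType) (e : rel T) : nat := #|edge_set e|.

Definition line_adj_mx (R : nzRingType) (T : finType) (e : rel T)
  : 'M[R]_(nL e) :=
  \matrix_(i, j) (line_adj (enum_val i) (enum_val j))%:R.

Definition eigenvalues_desc (R : rcfType) (n : nat) (A : 'M[R]_n) : seq R :=
  let p := char_poly A in
  sort (fun x y : R => y <= x) (flatten [seq nseq (mup x p) x | x <- rootsR p]).

(* k-th largest eigenvalue (1-based), counted with multiplicity. *)
Definition lambda (R : rcfType) (n : nat) (k : nat) (A : 'M[R]_n) : R :=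
  nth 0 (eigenvalues_desc A) k.-1.

(* Let G be d-regular with m edges and k = d - 1. Then L(G) is 2k-regular, so
   its adjacency matrix A is symmetric with tr A = 0, tr A^2 = 2mk and the
   eigenvalue 2k (constant vector); counting also gives d (d + 1) <= 2m, as
   d < |V(G)| and |V(G)| d = 2m. If lambda_3 >= m/3, then for every c >= 0 the
   eigenvalues satisfy (2k + c)^2 + 2 (m/3 + c)^2 <= sum (lambda_i + c)^2
   = 2mk + m c^2. For c = 0 this forces 3k <= m <= 6k, hence k < 9 by
   (k + 1)(k + 2) <= 2m, and then c = 1 violates it. *)

From HB Require Import structures.
From mathcomp Require Import all_boot all_order all_algebra.
From mathcomp Require Import polyrcf complex spectral sesquilinear.
From mathcomp Require Import zify ring lra.
Import Order.TTheory GRing.Theory Num.Theory.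
Local Open Scope ring_scope.

Section ThirdLargest.
Variable R : realFieldType.

Lemma sum_sqr_shift (s : seq R) (c : R) :
  \sum_(x <- s) (x + c) ^+ 2 =
  \sum_(x <- s) x ^+ 2 + 2 * c * \sum_(x <- s) x + (size s)%:R * c ^+ 2.
Proof.
elim: s => [|x s IHs]; first by rewrite !big_nil /=; ring.
by rewrite !big_cons IHs /= -addn1 natrD; ring.
Qed.

Lemma ler_sum_mem (f : R -> R) (s : seq R) (a : R) :
  (forall x, 0 <= f x) -> a \in s -> f a <= \sum_(x <- s) f x.
Proof.
move=> f_ge0; elim: s => [|x s IHs] //; rewrite in_cons big_cons.
case/orP=> [/eqP->|/IHs fa_le]; first by rewrite lerDl sumr_ge0.
by rewrite (le_trans fa_le) // lerDr.
Qed.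

Lemma sorted_sum_ge (f : R -> R) (s : seq R) (a L : R) :
  sorted >=%R s -> (3 <= size s)%N -> (forall x, 0 <= f x) ->
  (forall x y, L <= x -> x <= y -> f x <= f y) -> L <= s`_2 -> a \in s ->
  f a + f L *+ 2 <= \sum_(x <- s) f x.
Proof.
case: s => [|x0 [|x1 [|x2 s]]] //= /and3P[x10 x21 _] _ f_ge0 f_mono Lx2.
have fx2 : f L <= f x2 by exact: f_mono.
have fx1 : f L <= f x1 by apply: f_mono (le_trans Lx2 x21).
have fx0 : f L <= f x0 by apply: f_mono (le_trans Lx2 (le_trans x21 x10)).
have fs := @ler_sum_mem f s a f_ge0.
have fs0 : 0 <= \sum_(x <- s) f x by exact: sumr_ge0.
have fx2_ge0 := f_ge0 x2.
rewrite !big_cons mulr2n !in_cons => /or4P[/eqP->|/eqP->|/eqP->|/fs ?]; lra.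
Qed.

Lemma shifted_moment_gap {k m : R} : 0 <= k -> (k + 1) * (k + 2) <= 2 * m ->
  2 * m * k < (2 * k) ^+ 2 + 2 * (m / 3) ^+ 2 \/
  2 * m * k + m < (2 * k + 1) ^+ 2 + 2 * (m / 3 + 1) ^+ 2.
Proof.
move=> k_ge0 km_bound.
(* [2 m k - (2 k)^2 - 2 (m/3)^2 = - 2/9 (m - 3 k) (m - 6 k)] *)
have [pos|npos] := ltrP 0 ((m - 3 * k) * (m - 6 * k)).
  by left; rewrite !expr2; nra.
right.
have m3k : 3 * k <= m by nra.
have m6k : m <= 6 * k by nra.
have k9 : k <= 9 by nra.
rewrite !expr2; nra.
Qed.

Lemma third_largest_lt (s : seq R) (k : R) :
  sorted >=%R s -> (3 <= size s)%N -> 0 <= k ->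
  (k + 1) * (k + 2) <= 2 * (size s)%:R ->
  \sum_(x <- s) x = 0 -> \sum_(x <- s) x ^+ 2 = 2 * (size s)%:R * k ->
  2 * k \in s -> s`_2 < (size s)%:R / 3.
Proof.
move=> s_sorted s_ge3 k_ge0 km_bound sum1 sum2 ks.
set m := (size s)%:R in km_bound sum2 *.
have m_ge0 : 0 <= m by rewrite ler0n.
rewrite ltNge; apply/negP => third_ge.
have shifted_bound c : 0 <= c ->
    (2 * k + c) ^+ 2 + (m / 3 + c) ^+ 2 *+ 2 <= 2 * m * k + m * c ^+ 2.
  move=> c_ge0.
  have := @sorted_sum_ge (fun x => (x + c) ^+ 2) s (2 * k) (m / 3).
  rewrite sum_sqr_shift sum1 sum2 mulr0 addr0; apply=> // [x|x y Lx xy].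
    exact: sqr_ge0.
  rewrite ler_pXn2r ?nnegrE ?lerD2r //; lra.
have := shifted_bound 0 (lexx 0); have := shifted_bound 1 ler01.
rewrite mulr2n; case: (shifted_moment_gap k_ge0 km_bound); lra.
Qed.
End ThirdLargest.

Lemma char_poly_conj (F : fieldType) n (P A : 'M[F]_n) :
  P \in unitmx -> char_poly (invmx P *m A *m P) = char_poly A.
Proof.
move=> P_unit; rewrite /char_poly.
set Q := map_mx polyC P; set Qi := map_mx polyC (invmx P).
have QiQ : Qi *m Q = 1%:M by rewrite -map_mxM mulVmx // map_mx1.
have -> : char_poly_mx (invmx P *m A *m P) = Qi *m char_poly_mx A *m Q.
  rewrite /char_poly_mx mulmxBr mulmxBl mul_mx_scalar -scalemxAl QiQ scalemx1.
  by rewrite !map_mxM.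
by rewrite !det_mulmx mulrAC -det_mulmx QiQ det1 mul1r.
Qed.

Section Eigenvalues.
Variable R : rcfType.

Lemma mem_eigenvalues_desc n (A : 'M[R]_n) x :
  eigenvalue A x -> x \in eigenvalues_desc A.
Proof.
rewrite eigenvalue_root_char => root_x.
have p_neq0 : char_poly A != 0 by exact/monic_neq0/char_poly_monic.
rewrite /eigenvalues_desc mem_sort; apply/flattenP.
exists (nseq (mup x (char_poly A)) x); last first.
  by rewrite mem_nseq eqxx andbT -XsubC_dvd // dvdp_XsubCl.
by apply/mapP; exists x; rewrite // -(roots_on_rootsR p_neq0 x) in_itv.
Qed.

Lemma perm_eigenvalues_desc n (A : 'M[R]_n) (s : seq R) :
  char_poly A = \prod_(x <- s) ('X - x%:P) -> perm_eq (eigenvalues_desc A) s.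
Proof.
move=> char_A; rewrite /eigenvalues_desc perm_sort.
have p_neq0 : char_poly A != 0 by exact/monic_neq0/char_poly_monic.
apply/allP => z _; apply/eqP.
rewrite count_flatten sumnE !big_map.
under eq_bigr => x _ do rewrite count_nseq /=.
have mup_z : mup z (char_poly A) = count_mem z s.
  by rewrite char_A mu_prod_XsubC.
case: (boolP (z \in rootsR (char_poly A))) => z_root.
  rewrite (bigD1_seq z) ?uniq_roots //= eqxx mul1n big1 ?addn0 // => x.
  by rewrite eq_sym => /negbTE->.
rewrite big1_seq => [|x /andP[_ x_root]]; last first.
  by case: eqP x_root z_root => // -> ->.
rewrite -mup_z mupNroot //.
by rewrite -(roots_on_rootsR p_neq0 z) in_itv in z_root.
Qed.

Lemma symmetric_spectrum n (A : 'M[R]_n) : A^T = A -> exists s : seq R,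
  [/\ char_poly A = \prod_(x <- s) ('X - x%:P), \tr A = \sum_(x <- s) x
    & \tr (A *m A) = \sum_(x <- s) x ^+ 2].
Proof.
move=> A_sym; pose AC := map_mx (real_complex R) A.
have AC_herm : AC \is hermsymmx.
  apply: realsym_hermsym.
    apply/is_hermitianmxP; rewrite expr0 scale1r.
    by apply/matrixP => i j; rewrite /AC !mxE -[in LHS]A_sym mxE.
  by apply/mxOverP => i j; rewrite /AC mxE complex_real.
have /orthomx_spectralP AC_eq := hermitian_normalmx AC_herm.
have D_real := hermitian_spectral_diag_real AC_herm.
set P := spectralmx AC in AC_eq; set D := spectral_diag AC in AC_eq D_real.
have P_unit : P \in unitmx by apply: spectral_unit.
have tr_conj (B : 'M_n) : \tr (invmx P *m B *m P) = \tr B.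
  by rewrite mxtrace_mulC mulmxA mulmxV // mul1mx.
pose r i := complex.Re (D 0 i).
have D_r i : D 0 i = real_complex R (r i).
  by rewrite /r RRe_real //; move/mxOverP: D_real; apply.
exists [seq r i | i : 'I_n]; rewrite !big_image /=; split.
- apply: (map_poly_inj (real_complex R)).
  rewrite map_char_poly -/AC AC_eq char_poly_conj //.
  rewrite char_poly_trig ?diag_mx_is_trig //.
  rewrite rmorph_prod; apply: eq_bigr => i _.
  by rewrite mxE eqxx mulr1n D_r rmorphB /= map_polyX map_polyC.
- apply: complexI.
  rewrite -trace_map_mx -/AC AC_eq tr_conj mxtrace_diag rmorph_sum.
  by apply: eq_bigr => i _; rewrite D_r.
- apply: complexI.
  rewrite -trace_map_mx map_mxM -/AC.
  have -> : AC *m AC = invmx P *m (diag_mx D *m diag_mx D) *m P.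
    by rewrite AC_eq !mulmxA mulmxK.
  rewrite tr_conj mulmx_diag mxtrace_diag rmorph_sum.
  by apply: eq_bigr => i _; rewrite mxE D_r rmorphXn.
Qed.

Lemma symmetric_eigenvalues_desc n (A : 'M[R]_n) : A^T = A ->
  [/\ size (eigenvalues_desc A) = n, \sum_(x <- eigenvalues_desc A) x = \tr A
    & \sum_(x <- eigenvalues_desc A) x ^+ 2 = \tr (A *m A)].
Proof.
move=> /symmetric_spectrum[s [char_A -> ->]].
have s_perm : perm_eq (eigenvalues_desc A) s by exact: perm_eigenvalues_desc.
rewrite !(perm_big _ s_perm) (perm_size s_perm); split=> //.
by have := size_char_poly A; rewrite char_A size_prod_XsubC => -[].
Qed.

Lemma lambda3_lt n (A : 'M[R]_n) (k : R) :
  A^T = A -> (3 <= n)%N -> 0 <= k -> (k + 1) * (k + 2) <= 2 * n%:R ->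
  \tr A = 0 -> \tr (A *m A) = 2 * n%:R * k -> eigenvalue A (2 * k) ->
  lambda 3 A < n%:R / 3.
Proof.
move=> /symmetric_eigenvalues_desc[size_eig sum1 sum2].
move=> n_ge3 k_ge0 kn_bound tr1 tr2 eig.
have := @third_largest_lt _ (eigenvalues_desc A) k.
rewrite size_eig sum1 sum2; apply=> //; last exact: mem_eigenvalues_desc.
by apply: sort_sorted => x y; exact: le_total.
Qed.
End Eigenvalues.

Lemma eigenvalue_col_sum (F : fieldType) n (A : 'M[F]_n) (rho : F) :
  (0 < n)%N -> (forall j, \sum_i A i j = rho) -> eigenvalue A rho.
Proof.
move=> n_gt0 col_sum; apply/eigenvalueP; exists (const_mx 1).
  apply/rowP => j; rewrite !mxE mulr1 -(col_sum j).
  by apply: eq_bigr => i _; rewrite mxE mul1r.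
by apply/eqP => /rowP /(_ (Ordinal n_gt0)) /eqP; rewrite !mxE oner_eq0.
Qed.

Section LineGraph.
Context {T : finType} {e : rel T}.
Hypotheses (e_sym : symmetric e) (e_irr : irreflexive e).

Local Notation deg u := #|[set w | e u w]|.

Lemma is_edgeP E : reflect (exists a b, e a b /\ E = [set a; b]) (is_edge e E).
Proof.
apply: (iffP existsP) => [[a /existsP[b /andP[eab /eqP->]]]|].
  by exists a, b.
by move=> [a [b [eab ->]]]; exists a; apply/existsP; exists b; rewrite eab eqxx.
Qed.

Lemma adj_neq {a b} : e a b -> a != b.
Proof. by apply: contraTneq => ->; rewrite e_irr. Qed.

Definition incident_edges u := [set F in edge_set e | u \in F].

Lemma incident_edgesE u :
  incident_edges u = [set [set u; w] | w in [set w | e u w]].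
Proof.
apply/setP => F; rewrite !inE.
apply/andP/imsetP => [[/is_edgeP[a [b [eab ->]]]]|].
  rewrite !inE => /orP[] /eqP->; first by exists b; rewrite ?inE.
  by exists a; rewrite ?inE 1?e_sym // setUC.
move=> [w]; rewrite inE => euw ->; split; last by rewrite !inE eqxx.
by apply/is_edgeP; exists u, w.
Qed.

Lemma card_incident_edges u : #|incident_edges u| = deg u.
Proof.
rewrite incident_edgesE card_imset // => w1 w2 eq_uw.
have : w1 \in [set u; w2] by rewrite -eq_uw !inE eqxx orbT.
rewrite !inE => /orP[/eqP w1u|/eqP //].
have : w2 \in [set u; w1] by rewrite eq_uw !inE eqxx orbT.
by rewrite !inE w1u orbb => /eqP->.
Qed.

Lemma incident_edgesI a b :
  e a b -> incident_edges a :&: incident_edges b = [set [set a; b]].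
Proof.
move=> eab; apply/setP => F; rewrite !inE; apply/idP/idP; last first.
  move/eqP->; rewrite !inE !eqxx orbT andbT andbb.
  by apply/is_edgeP; exists a, b.
move=> /andP[/andP[/is_edgeP[x [y [exy ->]]] a_xy] /andP[_ b_xy]].
rewrite eq_sym eqEcard subUset !sub1set a_xy b_xy.
by rewrite !cards2 (adj_neq exy) (adj_neq eab).
Qed.

Lemma line_neighboursE a b : e a b ->
  [set F in edge_set e | line_adj [set a; b] F] =
  (incident_edges a :|: incident_edges b) :\ [set a; b].
Proof.
move=> eab; apply/setP => F; rewrite !inE /line_adj eq_sym.
case: (is_edge e F) (F != [set a; b]) => [] [] //=; rewrite ?andbF //.
apply/set0Pn/orP => [[x]|[a_F|b_F]].
- by rewrite !inE => /andP[] /orP[] /eqP-> ->; [left|right].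
- by exists a; rewrite !inE eqxx a_F.
- by exists b; rewrite !inE eqxx orbT b_F.
Qed.

Lemma card_line_neighbours a b : e a b ->
  #|[set F in edge_set e | line_adj [set a; b] F]| = (deg a + deg b - 2)%N.
Proof.
move=> eab; rewrite line_neighboursE //.
have ab_edge : is_edge e [set a; b] by apply/is_edgeP; exists a, b.
have ab_in : [set a; b] \in incident_edges a :|: incident_edges b.
  by rewrite !inE ab_edge !eqxx.
move: (cardsD1 [set a; b] (incident_edges a :|: incident_edges b)).
rewrite ab_in cardsU incident_edgesI // cards1 !card_incident_edges add1n.
by move=> h; rewrite subnS h.
Qed.

Lemma sum_deg : (\sum_u deg u = 2 * nL e)%N.
Proof.
transitivity (\sum_u \sum_(F in edge_set e) (u \in F : nat))%N.
  apply: eq_bigr => u _.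
  rewrite -card_incident_edges -sum1_card big_mkcond [RHS]big_mkcond.
  by apply: eq_bigr => F _; rewrite !inE; case: is_edge; case: (u \in F).
rewrite exchange_big /nL -sum1_card big_distrr /=.
apply: eq_bigr => F; rewrite inE => /is_edgeP[x [y [exy ->]]].
have <- : #|[set x; y]| = 2%N by rewrite cards2 (adj_neq exy).
rewrite muln1 -sum1_card [RHS]big_mkcond.
by apply: eq_bigr => u _; case: (u \in _).
Qed.

Lemma deg_lt_card u : (deg u < #|T|)%N.
Proof.
have sub_C1 : [set w | e u w] \subset [set~ u].
  by apply/subsetP => w; rewrite !inE; apply: contraTneq => ->; rewrite e_irr.
rewrite (leq_ltn_trans (subset_leq_card sub_C1)) // cardsC1 ltn_predL.
by apply/card_gt0P; exists u.
Qed.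

Context {d : nat}.
Hypothesis e_reg : forall v, #|[set w | e v w]| = d.

Lemma regular_deg_bound (v : T) : (d * d.+1 <= 2 * nL e)%N.
Proof.
rewrite -sum_deg (eq_bigr (fun=> d)) // sum_nat_const mulnC leq_mul2r.
by rewrite -{2}(e_reg v) deg_lt_card ?orbT.
Qed.

Variable R : nzRingType.
Local Notation A := (line_adj_mx R e).

Lemma trmx_line_adj_mx : A^T = A.
Proof. by apply/matrixP => i j; rewrite !mxE /line_adj eq_sym setIC. Qed.

Lemma mxtrace_line_adj_mx : \tr A = 0.
Proof. by apply: big1 => i _; rewrite mxE /line_adj eqxx. Qed.

Lemma line_adj_mx_row_sum i : \sum_j A i j = (2 * d.-1)%:R.
Proof.
have /is_edgeP[a [b [eab Ei]]] : is_edge e (enum_val i).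
  by move: (enum_valP i); rewrite inE.
have -> : (2 * d.-1 = d + d - 2)%N by lia.
have := card_line_neighbours a b eab; rewrite !e_reg => <-.
rewrite -Ei -sumr_const.
rewrite (eq_bigl (fun F => (F \in edge_set e) && line_adj (enum_val i) F)).
  rewrite big_mkcondr [RHS]big_enum_val; apply: eq_bigr => j _.
  by rewrite mxE; case: line_adj.
by move=> F; rewrite in_set.
Qed.

Lemma line_adj_mx_col_sum j : \sum_i A i j = (2 * d.-1)%:R.
Proof.
rewrite -(line_adj_mx_row_sum j); apply: eq_bigr => i _.
by rewrite -[in LHS]trmx_line_adj_mx mxE.
Qed.

Lemma mxtrace_line_adj_mx_sqr : \tr (A *m A) = (nL e * (2 * d.-1))%:R.
Proof.
transitivity (\sum_(i < nL e) ((2 * d.-1)%:R : R)).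
  apply: eq_bigr => i _; rewrite mxE -(line_adj_mx_row_sum i).
  apply: eq_bigr => j _; rewrite -{2}trmx_line_adj_mx !mxE.
  by case: line_adj; rewrite ?mulr1 ?mulr0.
by rewrite sumr_const card_ord [RHS]natrM mulr_natl.
Qed.
End LineGraph.

Theorem theorem3p3 (R : rcfType) (T : finType) (e : rel T) :
  simple_graph e -> regular e -> (3 <= nL e)%N ->
  lambda 3 (line_adj_mx R e) < (nL e)%:R / 3.
Proof.
move=> [e_sym e_irr] [d e_reg] m_ge3.
have [E] : exists E, E \in edge_set e.
  by apply/set0Pn; rewrite -card_gt0 (leq_trans _ m_ge3).
rewrite inE => /is_edgeP[a [b [eab _]]].
have [k d_eq] : exists k, d = k.+1.
  exists d.-1; rewrite prednK // -(e_reg a) card_gt0.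
  by apply/set0Pn; exists b; rewrite inE.
subst d; apply: (@lambda3_lt _ _ _ k%:R) => //.
- exact: trmx_line_adj_mx.
- have := regular_deg_bound e_sym e_irr e_reg a.
  rewrite -(ler_nat R) !natrM -!natr1; lra.
- exact: mxtrace_line_adj_mx.
- by rewrite (mxtrace_line_adj_mx_sqr e_sym e_irr e_reg) !natrM; ring.
- rewrite -natrM; apply: eigenvalue_col_sum; first exact: leq_trans m_ge3.
  exact: (line_adj_mx_col_sum e_sym e_irr e_reg).
Qed.
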